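(* For any traversal sequence $\tau$, metric $d$, and sequence of tasks $w^1,\dots,w^n$, let $C^{A2}$ be the total cost (processing plus transition cost) of the ''follow the traversal'' algorithm and $C^T$ the total cost (processing plus transition cost) of the fractional traversal algorithm on that task sequence. Then $C^{A2}\le 2\,C^T$.
   Context: A metrical task system has states $S=\{1,\dots,m\}$ and a symmetric non-negative matrix $(d_{st})$ with $d_{ss}=0$ satisfying the triangle inequality. A task is a vector $w\in\mathbb{R}_{\ge0}^m$. A traversal sequence is an infinite sequence $\tau=\tau_1,\tau_2,\dots$ of states. Write $\delta_{\ell,\ell'}=\delta_{\ell',\ell}=\sum_{j=\min(\ell,\ell')}^{\max(\ell,\ell')-1}d_{\tau_j\tau_{j+1}}$. Fractional traversal algorithm (FTA) on $\tau$: it keeps a position $j$ (initially $t_0=1$) and the work $\rho$ done at the current position since arriving (initially $0$). On a task $w$, with remaining fraction $f=1$, it repeats while $f>0$: $\lambda\gets\min\{(d_{\tau_j\tau_{j+1}}-\rho)/w_{\tau_j},f\}$ (interpreted as $f$ if $w_{\tau_j}=0$), $\rho\gets\rho+\lambda w_{\tau_j}$ (work done in state $\tau_j$), $f\gets f-\lambda$, and if $\rho=d_{\tau_j\tau_{j+1}}$ then $j\gets j+1,\rho\gets0$. Let $t_i$ be its position after task $i$. Its processing cost is the total work done and its transition cost is $\delta_{t_0,t_n}$. ''Follow the traversal'' algorithm: keeps a position $\ell_i$ in $\tau$, with $\ell_0=1$, and is run alongside the FTA on the same tasks. Given task $w^i$, let $j_{\min}=\min(\ell_{i-1},t_{i-1})$,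 $j_{\max}=\max(\ell_{i-1},t_{i-1})$, $D_0=\{j_{\min},\dots,j_{\max}\}$, and $\tilde c(j)=w^i_{\tau_j}$ if $j\in D_0$, $\tilde c(j)=w^i_{\tau_j}+\delta_{j_{\max},j}$ if $j>j_{\max}$, $\tilde c(j)=\infty$ otherwise. It sets $\ell_i\in\arg\min_{j\ge j_{\min}}\tilde c(j)$ (ties broken arbitrarily), moves to state $\tau_{\ell_i}$ and processes the whole task there, incurring cost $d_{\tau_{\ell_{i-1}}\tau_{\ell_i}}+w^i_{\tau_{\ell_i}}$. *)

From HB Require Import structures.
From mathcomp Require Import all_boot all_order all_algebra.
Set Implicit Arguments. Unset Strict Implicit. Unset Printing Implicit Defensive.
Import Order.TTheory GRing.Theory Num.Theory.
Local Open Scope ring_scope.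

Section MTS.
Variable (R : realFieldType) (m : nat).
(* states are 'I_m, d the metric, tau the traversal sequence (positions 1,2,...;
   tau 0 is never used) *)
Variable (d : 'I_m -> 'I_m -> R) (tau : nat -> 'I_m).

Definition is_metric : Prop :=
  [/\ forall s t, 0 <= d s t, forall s, d s s = 0, forall s t, d s t = d t s
    & forall s t u, d s u <= d s t + d t u].

Definition edge (j : nat) : R := d (tau j) (tau j.+1).

Definition delta (l l' : nat) : R :=
  \sum_(minn l l' <= j < maxn l l') edge j.

Definition task := 'I_m -> R.

(* One execution of the inner "while f > 0" loop of the FTA on task w.
   fta_loop w j rho f c j' rho' : starting at position j with accumulated work
   rho and remaining fraction f, the loop terminates at position j' with work
   rho', having done total work c. *)
Inductive fta_loop (w : task) : nat -> R -> R -> R -> nat -> R -> Prop :=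
| fta_stop j rho f : ~~ (0 < f) -> fta_loop w j rho f 0 j rho
| fta_step j rho f c j' rho' :
    0 < f ->
    let lam := if w (tau j) == 0 then f
               else Num.min ((edge j - rho) / w (tau j)) f in
    let rho1 := rho + lam * w (tau j) in
    let f1 := f - lam in
    fta_loop w (if rho1 == edge j then j.+1 else j)
               (if rho1 == edge j then 0 else rho1) f1 c j' rho' ->
    fta_loop w j rho f (lam * w (tau j) + c) j' rho'.

(* FTA run on a sequence of tasks: fta_run j rho ws ts P means that, starting
   in configuration (j, rho), processing ws yields the successive positions ts
   (t_1, ..., t_n) and total processing cost P. *)
Inductive fta_run : nat -> R -> seq task -> seq nat -> R -> Prop :=
| fta_nil j rho : fta_run j rho [::] [::] 0
| fta_cons j rho w ws c j1 rho1 ts P :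
    fta_loop w j rho 1 c j1 rho1 ->
    fta_run j1 rho1 ws ts P ->
    fta_run j rho (w :: ws) (j1 :: ts) (c + P).

Definition tpos (ts : seq nat) (i : nat) : nat :=
  if i is i'.+1 then nth 0%N ts i' else 1%N.

(* the modified cost \tilde c(j) for j >= jmin (it is +oo for j < jmin) *)
Definition ctilde (w : task) (jmin jmax j : nat) : R :=
  if (j <= jmax)%N then w (tau j) else w (tau j) + delta jmax j.

(* l is a valid choice of "follow the traversal" for task w given previous
   positions lprev (its own) and tprev (FTA's): l is an argmin of ctilde
   over j >= jmin. *)
Definition ftt_choice (w : task) (lprev tprev l : nat) : Prop :=
  let jmin := minn lprev tprev in
  let jmax := maxn lprev tprev in
  (jmin <= l)%N /\
  forall j, (jmin <= j)%N -> ctilde w jmin jmax l <= ctilde w jmin jmax j.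

Definition ftt_cost (ws : seq task) (l : nat -> nat) : R :=
  \sum_(i < size ws) (d (tau (l i)) (tau (l i.+1)) + (nth (fun _ => 0) ws i) (tau (l i.+1))).

End MTS.

From HB Require Import structures.
From mathcomp Require Import all_boot all_order all_algebra.
From mathcomp Require Import lra.

Set Implicit Arguments.
Unset Strict Implicit.
Unset Printing Implicit Defensive.
Import Order.TTheory GRing.Theory Num.Theory.
Local Open Scope ring_scope.

(* Amortize with the potential delta(l_i, t_i).  Measuring positions by arclength
   along tau makes every delta a distance on the real line.  On task i the FTA
   moves from t_{i-1} to t_i and its work is a combination, with fractions summing
   to 1, of the weights at the visited positions, so it pays at least w^i at some
   visited k.  As l_i minimises ctilde, ctilde(l_i) <= ctilde(k), which is at most
   that work plus delta(t_{i-1}, t_i); a case analysis on the line then bounds the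
   amortized cost of step i by twice the FTA's cost of step i.  Summing telescopes,
   the initial potential being 0. *)

Lemma fta_fraction_bounds (R : realFieldType) (wj e rho f : R) :
  0 <= wj -> 0 <= f -> rho <= e ->
  let lam := if wj == 0 then f else Num.min ((e - rho) / wj) f in
  [/\ 0 <= lam, lam <= f & lam * wj <= e - rho].
Proof.
move=> wj_ge0 f_ge0 rho_le lam; rewrite /lam.
have e_rho_ge0 : 0 <= e - rho by rewrite subr_ge0.
have [->|wj_neq0] := eqVneq wj 0; first by rewrite mulr0.
have wj_gt0 : 0 < wj by rewrite lt_def wj_neq0.
split; first by rewrite le_min f_ge0 divr_ge0 // ltW.
  by rewrite ge_min lexx orbT.
by rewrite -ler_pdivlMr // ge_min lexx.
Qed.

(* A, B, L, T are the arclength positions of l_{i-1}, t_{i-1}, l_i, t_i and W is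
   the weight paid at l_i. *)
Lemma line_potential_step (R : realDomainType) (A B L T W c : R) :
  B <= T -> Num.min A B <= L -> 0 <= W -> 0 <= c ->
  W + Num.max 0 (L - Num.max A B) <= c + Num.max 0 (T - Num.max A B) ->
  `|L - A| + W + `|T - L| <= `|B - A| + 2 * (c + (T - B)).
Proof.
case: (leP A B) => hAB.
- rewrite (ger0_norm (_ : 0 <= B - A)) ?subr_ge0 //.
  case: (ger0P (L - B)); case: (ger0P (T - B)); case: (ger0P (L - A));
  case: (ger0P (T - L)); lra.
- rewrite (ltr0_norm (_ : B - A < 0)) ?subr_lt0 //.
  case: (ger0P (L - A)); case: (ger0P (T - A)); case: (ger0P (T - L)); lra.
Qed.

Section FollowTheTraversal.
Variables (R : realFieldType) (m : nat) (d : 'I_m -> 'I_m -> R) (tau : nat -> 'I_m).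
Hypothesis d_metric : is_metric d.

Local Notation edge := (edge d tau).
Local Notation delta := (delta d tau).

Definition arclen (j : nat) : R := \sum_(0 <= k < j) edge k.

Lemma edge_ge0 j : 0 <= edge j.
Proof. by case: d_metric => d_ge0 _ _ _; exact: d_ge0. Qed.

Lemma arclen_sub i j : (i <= j)%N -> arclen j - arclen i = \sum_(i <= k < j) edge k.
Proof. by move=> hij; rewrite /arclen (big_cat_nat (leq0n i) hij) /= addrC addrK. Qed.

Lemma arclen_le : {homo arclen : i j / (i <= j)%N >-> i <= j}.
Proof.
move=> i j hij; rewrite -subr_ge0 arclen_sub //.
by apply: sumr_ge0 => k _; exact: edge_ge0.
Qed.

Lemma delta_arclen i j : delta i j = `|arclen j - arclen i|.
Proof.
wlog hij : i j / (i <= j)%N.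
  move=> W; case: (leqP i j) => [/W //|/ltnW/W].
  by rewrite /delta distrC minnC maxnC.
rewrite /delta (minn_idPl hij) (maxn_idPr hij) -arclen_sub // ger0_norm //.
by rewrite subr_ge0 arclen_le.
Qed.

Lemma arclen_maxn i j : arclen (maxn i j) = Num.max (arclen i) (arclen j).
Proof.
case: (leqP i j) => hij.
  by rewrite max_r // arclen_le.
by rewrite max_l // arclen_le // ltnW.
Qed.

Lemma arclen_minn i j : arclen (minn i j) = Num.min (arclen i) (arclen j).
Proof.
case: (leqP i j) => hij.
  by rewrite min_l // arclen_le.
by rewrite min_r // arclen_le // ltnW.
Qed.

Lemma dist_le_delta i j : d (tau i) (tau j) <= delta i j.
Proof.
case: d_metric => _ d_refl d_sym d_tri.
wlog hij : i j / (i <= j)%N.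
  move=> W; case: (leqP i j) => [/W //|/ltnW/W].
  by rewrite d_sym /delta minnC maxnC.
rewrite delta_arclen ger0_norm ?subr_ge0 ?arclen_le //.
elim: j hij => [|j IH]; first by rewrite leqn0 => /eqP->; rewrite d_refl subrr.
rewrite leq_eqVlt => /orP[/eqP->|/IH dij]; first by rewrite d_refl subrr.
apply: le_trans (d_tri _ (tau j) _) _.
by rewrite /arclen big_nat_recr //= -/(arclen j) addrAC lerD2r.
Qed.

Lemma ctildeE (w : task R m) jmin jmax j :
  ctilde d tau w jmin jmax j = w (tau j) + Num.max 0 (arclen j - arclen jmax).
Proof.
rewrite /ctilde; case: leqP => hj.
  by rewrite max_l ?addr0 // subr_le0 arclen_le.
rewrite delta_arclen ger0_norm ?subr_ge0 ?arclen_le ?(ltnW hj) //.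
by rewrite max_r // subr_ge0 arclen_le // ltnW.
Qed.

Lemma fta_loop_spec (w : task R m) j rho f c j' rho' :
  fta_loop d tau w j rho f c j' rho' ->
  (forall s, 0 <= w s) -> 0 <= f -> 0 <= rho <= edge j ->
  [/\ (j <= j')%N, 0 <= rho' <= edge j' &
      exists2 k, (j <= k <= j')%N & f * w (tau k) <= c].
Proof.
move=> loop w_ge0; elim: loop => {j rho f c j' rho'}.
  move=> j rho f f_le0 f_ge0 rho_in.
  have -> : f = 0 by apply/eqP; rewrite eq_le f_ge0 andbT leNgt.
  by split=> //; exists j; rewrite ?leqnn ?mul0r.
move=> j rho f c j' rho' _ lam rho1 f1 _ IH f_ge0 /andP[rho_ge0 rho_le].
have [lam_ge0 lam_le work_le] :
    [/\ 0 <= lam, lam <= f & lam * w (tau j) <= edge j - rho] :=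
  fta_fraction_bounds (w_ge0 (tau j)) f_ge0 rho_le.
have work_ge0 : 0 <= lam * w (tau j) by rewrite mulr_ge0.
have f1_ge0 : 0 <= f1 by rewrite subr_ge0.
have rho1_in : 0 <= rho1 <= edge j by rewrite /rho1; apply/andP; split; lra.
set j1 := if rho1 == edge j then j.+1 else j in IH.
set rho1' := if rho1 == edge j then 0 else rho1 in IH.
have [j1_le rho1'_in] : (j <= j1)%N /\ 0 <= rho1' <= edge j1.
  by rewrite /j1 /rho1'; case: ifP; rewrite ?lexx ?edge_ge0.
have [_ rho'_in [k /andP[j1k kj'] f1wk]] := IH f1_ge0 rho1'_in.
have jk := leq_trans j1_le j1k.
have f_split x : f * x = lam * x + f1 * x by rewrite /f1 mulrBl addrC subrK.
split=> //; first exact: leq_trans jk kj'.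
have [wj_le|wk_lt] := leP (w (tau j)) (w (tau k)).
  exists j; first by rewrite leqnn (leq_trans jk kj').
  by rewrite f_split lerD2l (le_trans _ f1wk) // ler_wpM2l.
exists k; first by rewrite jk kj'.
by rewrite f_split lerD // ler_wpM2l // ltW.
Qed.

Lemma ftt_amortized_step (w : task R m) a b t l c :
  (forall s, 0 <= w s) -> (b <= t)%N -> 0 <= c ->
  (exists2 k, (b <= k <= t)%N & w (tau k) <= c) ->
  ftt_choice d tau w a b l ->
  d (tau a) (tau l) + w (tau l) + delta l t <=
    delta a b + 2 * (c + (arclen t - arclen b)).
Proof.
move=> w_ge0 bt c_ge0 [k /andP[bk kt] wk_le] [l_ge l_min].
have ctilde_l : ctilde d tau w (minn a b) (maxn a b) l <=
    c + Num.max 0 (arclen t - arclen (maxn a b)).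
  apply: le_trans (l_min k (leq_trans (geq_minr a b) bk)) _.
  rewrite ctildeE lerD // ge_max le_max lexx /= le_max lerD2r arclen_le //.
  by rewrite orbT.
rewrite ctildeE arclen_maxn in ctilde_l.
have := line_potential_step (arclen_le bt) _ (w_ge0 (tau l)) c_ge0 ctilde_l.
rewrite -arclen_minn arclen_le // => /(_ isT).
have := dist_le_delta a l; rewrite !delta_arclen; lra.
Qed.

(* tpos with an arbitrary starting position, so that runs can be peeled from the
   front; tpos ts is tpos_from 1 ts. *)
Definition tpos_from (j0 : nat) (ts : seq nat) (i : nat) : nat :=
  if i is i'.+1 then nth 0%N ts i' else j0.

Lemma tpos_from_cons j j1 ts i : tpos_from j (j1 :: ts) i.+1 = tpos_from j1 ts i.
Proof. by case: i. Qed.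

Lemma ftt_cost_cons (w : task R m) ws (l : nat -> nat) :
  ftt_cost d tau (w :: ws) l =
  d (tau (l 0%N)) (tau (l 1%N)) + w (tau (l 1%N)) + ftt_cost d tau ws (l \o succn).
Proof. by rewrite /ftt_cost big_ord_recl. Qed.

Lemma ftt_amortized_run j rho ws ts P (l : nat -> nat) :
  fta_run d tau j rho ws ts P -> 0 <= rho <= edge j ->
  (forall i s, (i < size ws)%N -> 0 <= (nth (fun _ => 0) ws i) s) ->
  (forall i, (i < size ws)%N ->
     ftt_choice d tau (nth (fun _ => 0) ws i) (l i) (tpos_from j ts i) (l i.+1)) ->
  ftt_cost d tau ws l + delta (l (size ws)) (tpos_from j ts (size ws)) <=
    delta (l 0%N) j + 2 * (P + (arclen (tpos_from j ts (size ws)) - arclen j)).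
Proof.
move=> run; elim: run l => {j rho ws ts P}.
  by move=> j rho l _ _ _ /=; rewrite /ftt_cost big_ord0 subrr addr0 mulr0 addr0 add0r.
move=> j rho w ws c j1 rho1 ts P loop _ IH l rho_in ws_ge0 choice.
have w_ge0 s : 0 <= w s by exact: (ws_ge0 0%N).
have [jj1 rho1_in [k jkj1]] := fta_loop_spec loop w_ge0 ler01 rho_in.
rewrite mul1r => wk_le.
have c_ge0 : 0 <= c := le_trans (w_ge0 _) wk_le.
have := ftt_amortized_step w_ge0 jj1 c_ge0 (ex_intro2 _ _ k jkj1 wk_le) (choice 0%N isT).
have choice_tail i : (i < size ws)%N ->
    ftt_choice d tau (nth (fun _ => 0) ws i) (l i.+1) (tpos_from j1 ts i) (l i.+2).
  by rewrite -(tpos_from_cons j); exact: choice i.+1.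
have := IH (l \o succn) rho1_in (fun i => ws_ge0 i.+1) choice_tail.
rewrite ftt_cost_cons tpos_from_cons /=; lra.
Qed.
End FollowTheTraversal.

Theorem theorem2 (R : realFieldType) (m : nat) (d : 'I_m -> 'I_m -> R)
  (tau : nat -> 'I_m) (ws : seq (task R m)) (ts : seq nat) (P : R)
  (l : nat -> nat) :
  is_metric d ->
  (forall i s, (i < size ws)%N -> 0 <= (nth (fun _ => 0) ws i) s) ->
  fta_run d tau 1%N 0 ws ts P ->
  l 0%N = 1%N ->
  (forall i, (i < size ws)%N ->
     ftt_choice d tau (nth (fun _ => 0) ws i) (l i) (tpos ts i) (l i.+1)) ->
  ftt_cost d tau ws l <= 2 * (P + delta d tau 1%N (tpos ts (size ws))).
Proof.
move=> d_metric ws_ge0 run l0 choice.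
have rho0_in : (0 : R) <= 0 <= edge d tau 1%N by rewrite lexx edge_ge0.
have := ftt_amortized_run d_metric run rho0_in ws_ge0 choice.
change (tpos_from 1%N ts (size ws)) with (tpos ts (size ws)).
have := ler_norm (arclen d tau (tpos ts (size ws)) - arclen d tau 1%N).
have := normr_ge0 (arclen d tau (tpos ts (size ws)) - arclen d tau (l (size ws))).
rewrite l0 !delta_arclen // subrr normr0; lra.
Qed.
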